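(* Let $G$ be a connected unicyclic bipartite graph with $n$ vertices. Then $$EE(G) \ge 2\cosh(2) + (n-2),$$ with equality if and only if $G\cong C_4$.
   Context: All graphs are finite, simple and undirected. For a graph $G$ with adjacency matrix $A(G)$ having eigenvalues $\lambda_1\ge\cdots\ge\lambda_n$, the Estrada index is $EE(G)=\sum_{i=1}^n e^{\lambda_i}$. A connected graph is unicyclic if it contains exactly one cycle. $C_4$ is the cycle on 4 vertices. *)

From Stdlib Require Import Reals Lra Lia Arith List Relation_Operators.
Import ListNotations.
Open Scope R_scope.

(* A finite simple graph on vertex set {0,...,n-1}: adjacency is a boolean
   relation, symmetric and irreflexive on the vertex set (values outside
   {0..n-1} are irrelevant). *)
Record graph := Graph {
  gn : nat;
  gadj : nat -> nat -> bool
}.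

Definition simple_graph (G : graph) : Prop :=
  (forall u v, (u < gn G)%nat -> (v < gn G)%nat -> gadj G u v = gadj G v u) /\
  (forall u, (u < gn G)%nat -> gadj G u u = false).

Definition edge (G : graph) (u v : nat) : Prop :=
  (u < gn G)%nat /\ (v < gn G)%nat /\ gadj G u v = true.

Definition connected (G : graph) : Prop :=
  forall u v, (u < gn G)%nat -> (v < gn G)%nat ->
    clos_refl_trans nat (edge G) u v.

Definition is_cycle (G : graph) (c : list nat) : Prop :=
  (3 <= length c)%nat /\ NoDup c /\
  (forall i, (i < length c)%nat ->
     edge G (nth i c 0%nat) (nth ((i + 1) mod length c) c 0%nat)).

Definition cycle_edge (c : list nat) (u v : nat) : Prop :=
  exists i, (i < length c)%nat /\
    let a := nth i c 0%nat in let b := nth ((i + 1) mod length c) c 0%nat in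
    ((u = a /\ v = b) \/ (u = b /\ v = a)).

(* Exactly one cycle (cycles identified by their edge sets). *)
Definition unicyclic (G : graph) : Prop :=
  connected G /\
  exists c, is_cycle G c /\
    forall c', is_cycle G c' -> forall u v, cycle_edge c u v <-> cycle_edge c' u v.

Definition bipartite (G : graph) : Prop :=
  exists col : nat -> bool, forall u v, edge G u v -> col u <> col v.

Definition adj_matrix (G : graph) (i j : nat) : R :=
  if gadj G i j then 1 else 0.

Definition minor (M : nat -> nat -> R) (j : nat) : nat -> nat -> R :=
  fun r c => M (S r) (if (c <? j)%nat then c else S c).

Fixpoint det (n : nat) (M : nat -> nat -> R) : R :=
  match n with
  | O => 1
  | S m => fold_right Rplus 0
             (map (fun j => (-1) ^ j * M O j * det m (minor M j)) (seq 0 (S m)))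
  end.

Definition charpoly_at (n : nat) (M : nat -> nat -> R) (x : R) : R :=
  det n (fun i j => (if (i =? j)%nat then x else 0) - M i j).

(* lam is the list of eigenvalues of M, with multiplicity:
   det(xI - M) = prod_i (x - lam_i) for all real x. *)
Definition is_spectrum (n : nat) (M : nat -> nat -> R) (lam : list R) : Prop :=
  length lam = n /\
  forall x, charpoly_at n M x = fold_right Rmult 1 (map (fun l => x - l) lam).

Definition estrada_of (lam : list R) : R := fold_right Rplus 0 (map exp lam).

Definition C4 : graph :=
  Graph 4 (fun i j => orb (j =? (i + 1) mod 4)%nat (i =? (j + 1) mod 4)%nat).

Definition isomorphic (G H : graph) : Prop :=
  gn G = gn H /\
  exists f : nat -> nat,
    (forall u, (u < gn G)%nat -> (f u < gn H)%nat) /\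
    (forall u v, (u < gn G)%nat -> (v < gn G)%nat -> f u = f v -> u = v) /\
    (forall u v, (u < gn G)%nat -> (v < gn G)%nat ->
       gadj G u v = gadj H (f u) (f v)).

(* A bipartite graph has a symmetric spectrum, so EE(G) is the sum of cosh over the
   eigenvalues, and the sum of their squares is tr A^2, twice the number of edges.  A
   connected graph containing a cycle has at least as many edges as vertices: send every
   vertex either to its successor on the cycle or one step closer to it; no vertex comes
   back in two steps, so the n pairs {v, phi v} are distinct edges.  With
   cosh x >= 1 + x^2/2 + x^4/24 >= 5/6 + 2/3 x^2 this gives EE(G) >= 13 n / 6, which
   exceeds 2 cosh 2 + n - 2 as soon as n >= 5 because 2 cosh 2 < 47/6.  Bipartite cycles
   have length at least 4, and a bipartite unicyclic graph on 4 vertices is C4, whose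
   spectrum {2, 0, 0, -2} gives equality. *)

From Stdlib Require Import Reals Lra Lia PeanoNat List Relations Wf_nat Factorial.
From Stdlib Require Import Classical ClassicalEpsilon.
From Coquelicot Require Import Coquelicot.
From mathcomp Require Import all_boot all_fingroup all_algebra Rstruct zify.
(* Imported only locally: its ring and field tactics would shadow the Stdlib ones,
   which are needed on goals stated with the Stdlib real operations. *)
From mathcomp Require ring.
Import GRing.Theory Num.Theory.

Section ExpTaylor.
Local Open Scope R_scope.

Fixpoint exp_taylor (n : nat) (x : R) : R :=
  if n is m.+1 then exp_taylor m x + x ^ m / INR (fact m) else 0.

Lemma exp_taylorS n x : exp_taylor n.+1 x = exp_taylor n x + x ^ n / INR (fact n).
Proof. by []. Qed.

Lemma exp_taylor0 n : exp_taylor n.+1 0 = 1.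
Proof.
elim: n => [|n IH]; first by rewrite /=; field.
by rewrite exp_taylorS IH pow_i; [field; apply: INR_fact_neq_0 | lia].
Qed.

Lemma is_derive_exp_taylor n x : is_derive (exp_taylor n.+1) x (exp_taylor n x).
Proof.
elim: n x => [|n IH] x.
  by apply: (is_derive_ext (fun _ => 1)) => [t|]; [rewrite /=; field | auto_derive].
apply: (is_derive_plus (exp_taylor n.+1) (fun t => t ^ n.+1 / INR (fact n.+1))) => //.
auto_derive => //.
rewrite -/(INR n.+1) plus_INR mult_INR S_INR; field.
by have := INR_fact_lt_0 n; have := pos_INR n; nra.
Qed.

Lemma mvt_origin (f df : R -> R) x :
  (forall t, is_derive f t (df t)) -> f 0 = 0 -> x <> 0 ->
  exists c, 0 < c * x /\ f x = df c * x.
Proof.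
move=> f_df f0 x_neq0.
have f_df' t : derivable_pt_lim f t (df t) by apply/is_derive_Reals.
case: (Rlt_or_le 0 x) => [x_gt0 | x_le0].
- have [c [fx c_in]] := MVT_cor2 f df 0 x x_gt0 (fun c _ => f_df' c).
  by exists c; split; [nra | lra].
- have [c [fx c_in]] := MVT_cor2 f df x 0 ltac:(lra) (fun c _ => f_df' c).
  by exists c; split; [nra | lra].
Qed.

Lemma mul_nonneg_of_deriv_nonneg (f df : R -> R) :
  (forall t, is_derive f t (df t)) -> f 0 = 0 -> (forall t, 0 <= df t) ->
  forall x, 0 <= x * f x.
Proof.
move=> f_df f0 df_ge0 x; case: (Req_dec x 0) => [-> | x_neq0]; first lra.
have [c [_ ->]] := mvt_origin f df x f_df f0 x_neq0.
by have := df_ge0 c; nra.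
Qed.

Lemma nonneg_of_mul_deriv_nonneg (f df : R -> R) :
  (forall t, is_derive f t (df t)) -> f 0 = 0 -> (forall t, 0 <= t * df t) ->
  forall x, 0 <= f x.
Proof.
move=> f_df f0 df_sign x; case: (Req_dec x 0) => [-> | x_neq0]; first lra.
have [c [cx_gt0 ->]] := mvt_origin f df x f_df f0 x_neq0.
by have := df_sign c; nra.
Qed.

(* Odd-degree Taylor polynomials of exp are global lower bounds: the remainders
   alternate between being nonnegative and having the sign of x. *)
Lemma exp_taylor_le_exp n x : exp_taylor (2 * n) x <= exp x.
Proof.
set rem := fun k t => exp t - exp_taylor k t.
have rem_derive k t : is_derive (rem k.+1) t (rem k t).
  by apply: is_derive_minus; [apply: is_derive_exp | apply: is_derive_exp_taylor].
have rem0 k : rem k.+1 0 = 0 by rewrite /rem exp_taylor0 exp_0; ring.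
suff : forall t, 0 <= rem (2 * n)%nat t by move/(_ x); rewrite /rem; lra.
elim: n => [|n IH] t; first by rewrite /rem /=; have := exp_pos t; lra.
have -> : (2 * n.+1 = (2 * n).+1.+1)%nat by lia.
apply: (nonneg_of_mul_deriv_nonneg _ _ (rem_derive _) (rem0 _)).
exact: (mul_nonneg_of_deriv_nonneg _ _ (rem_derive _) (rem0 _)).
Qed.

Lemma cosh_ge_quadratic x : 5 / 6 + 2 / 3 * x ^ 2 <= cosh x.
Proof.
have := exp_taylor_le_exp 3 x; have := exp_taylor_le_exp 3 (- x).
have := pow2_ge_0 (x ^ 2 - 2); rewrite /cosh /=; lra.
Qed.

Lemma two_cosh2_lt : 2 * cosh 2 < 47 / 6.
Proof.
have eN1_ge := exp_taylor_le_exp 3 (-1); have e2_ge := exp_taylor_le_exp 3 2.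
rewrite /= in eN1_ge e2_ge.
have eN1_eN1_e2 : exp (-1) * exp (-1) * exp 2 = 1.
  by rewrite -!exp_plus -exp_0; congr exp; ring.
have eN2_e2 : exp (-2) * exp 2 = 1 by rewrite -exp_plus -exp_0; congr exp; ring.
have eN1_sqr_ge : 121 / 900 <= exp (-1) * exp (-1) by nra.
have e2_le : exp 2 <= 900 / 121 by nra.
have eN2_le : exp (-2) <= 15 / 109 by have := exp_pos (-2); nra.
by rewrite /cosh; replace (- (2)) with (-2) by ring; lra.
Qed.

End ExpTaylor.

Lemma choice_lt (n : nat) (P : nat -> nat -> Prop) :
  (forall v, (v < n)%N -> exists w, P v w) -> exists f, forall v, (v < n)%N -> P v (f v).
Proof.
move=> P_ex; apply: (ClassicalEpsilon.choice (fun v w => (v < n)%N -> P v w)) => v.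
by case: (boolP (v < n)%N) => [/P_ex [w Pw] | v_ge]; [exists w | exists 0%N].
Qed.

Section Cycles.
Local Open Scope nat_scope.
Variable G : graph.

Lemma cycle_vertex_lt c v : is_cycle G c -> In v c -> v < gn G.
Proof.
move=> [_ [_ c_edge]] /(In_nth _ _ 0) [i [i_lt <-]].
by have [/ltP ? _] := c_edge i i_lt.
Qed.

Lemma cycle_length_le c : is_cycle G c -> length c <= gn G.
Proof.
move=> c_cycle; have [_ [c_nodup _]] := c_cycle.
rewrite -(length_seq (gn G) 0); apply/leP/NoDup_incl_length => // v v_in.
by apply/in_seq; have := cycle_vertex_lt _ _ c_cycle v_in; lia.
Qed.

Lemma bipartite_no_triangle u v w : bipartite G ->
  edge G u v -> edge G v w -> edge G w u -> False.
Proof.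
move=> [col col_edge] /col_edge uv /col_edge vw /col_edge wu.
by move: uv vw wu; case: (col u); case: (col v); case: (col w).
Qed.

Lemma bipartite_cycle_length_ge4 c : bipartite G -> is_cycle G c -> 4 <= length c.
Proof.
move=> G_bip [c_len [_ c_edge]]; case: (eqVneq (length c) 3) => [c_len3 | ]; last by lia.
rewrite c_len3 in c_edge; exfalso.
by apply: (bipartite_no_triangle _ _ _ G_bip (c_edge 0 _) (c_edge 1 _) (c_edge 2 _)); lia.
Qed.

Lemma bipartite_4cycle_adj c : simple_graph G -> bipartite G -> is_cycle G c ->
  length c = 4 -> forall i j, i < 4 -> j < 4 ->
  gadj G (List.nth i c 0) (List.nth j c 0) = gadj C4 i j.
Proof.
move=> [G_sym G_irr] G_bip [_ [_ c_edge]].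
case: c c_edge => [|c0 [|c1 [|c2 [|c3 [|//]]]]] // /= c_edge _.
have [c0_lt [c1_lt e01]] := c_edge 0 ltac:(lia).
have [_ [c2_lt e12]] := c_edge 1 ltac:(lia).
have [_ [c3_lt e23]] := c_edge 2 ltac:(lia).
have [_ [_ e30]] := c_edge 3 ltac:(lia).
have adj_sym u v : (u < gn G)%coq_nat -> (v < gn G)%coq_nat -> gadj G u v -> gadj G v u.
  by move=> u_lt v_lt; rewrite G_sym.
have no_chord u v w : (u < gn G)%coq_nat -> (v < gn G)%coq_nat -> (w < gn G)%coq_nat ->
    gadj G u v -> gadj G v w -> gadj G u w = false.
  move=> u_lt v_lt w_lt uv vw; apply/negbTE/negP => uw.
  by apply: (bipartite_no_triangle u v w G_bip) => //; rewrite /edge G_sym.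
move=> i j; case: i => [|[|[|[|//]]]] _; case: j => [|[|[|[|//]]]] _ /=; rewrite ?G_irr //.
all: first [by apply: adj_sym | by apply: (no_chord _ c1) | by apply: (no_chord _ c2)
           | by apply: (no_chord _ c3) | by apply: (no_chord _ c0)].
Qed.

Lemma bipartite_4cycle_isomorphic_C4 c : simple_graph G -> bipartite G -> is_cycle G c ->
  gn G = 4 -> isomorphic G C4.
Proof.
move=> G_simple G_bip c_cycle n4.
have c_len : length c = 4.
  by have := bipartite_cycle_length_ge4 _ G_bip c_cycle; have := cycle_length_le _ c_cycle; lia.
have [_ [c_nodup _]] := c_cycle.
have c_full : incl (List.seq 0 4) c.
  apply: NoDup_length_incl => //; first by rewrite c_len length_seq.
  by move=> v v_in; apply/in_seq; have := cycle_vertex_lt _ _ c_cycle v_in; lia.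
have c_onto u : u < 4 -> exists i, i < 4 /\ List.nth i c 0 = u.
  move=> u_lt; have [i [i_lt c_i]] := In_nth _ _ 0 (c_full u ltac:(apply/in_seq; lia)).
  by exists i; split=> //; lia.
have [f f_spec] := choice_lt _ _ c_onto.
split=> //; exists f; rewrite n4; split; [|split].
- by move=> u /ltP /f_spec [/ltP].
- move=> u v /ltP u_lt /ltP v_lt fuv.
  by rewrite -(f_spec u u_lt).2 -(f_spec v v_lt).2 fuv.
- move=> u v /ltP u_lt /ltP v_lt.
  rewrite -{1}(f_spec u u_lt).2 -{1}(f_spec v v_lt).2.
  by apply: bipartite_4cycle_adj => //; [apply: (f_spec u u_lt).1 | apply: (f_spec v v_lt).1].
Qed.

End Cycles.

Fixpoint reaches_cycle (G : graph) (c : list nat) (k v : nat) : Prop :=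
  if k is k'.+1 then exists w, edge G v w /\ reaches_cycle G c k' w else In v c.

Section Orientation.
Local Open Scope nat_scope.
Variables (G : graph) (c : list nat).
Hypotheses (G_connected : connected G) (c_cycle : is_cycle G c).

Lemma succ_mod_succ_mod_neq L i : 3 <= L -> i < L -> Nat.modulo (Nat.modulo (i + 1) L + 1) L <> i.
Proof.
move=> L_ge3 i_lt; case: (eqVneq (i + 1) L) => [i1_eq | i1_neq].
  by rewrite i1_eq Nat.Div0.mod_same Nat.mod_small; lia.
rewrite (Nat.mod_small (i + 1)); last by lia.
case: (eqVneq (i + 2) L) => [i2_eq | i2_neq].
  by rewrite -addnA i2_eq Nat.Div0.mod_same; lia.
by rewrite Nat.mod_small; lia.
Qed.

Lemma connected_reaches_cycle v : v < gn G -> exists k, reaches_cycle G c k v.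
Proof.
have [c_len _] := c_cycle.
have c0_in : In (List.nth 0 c 0) c by apply: nth_In; lia.
have c0_lt := ltP (cycle_vertex_lt _ _ _ c_cycle c0_in).
move=> /ltP v_lt; move: c0_in.
elim: (clos_rt_rt1n _ _ _ _ (G_connected v _ v_lt c0_lt)) => [x x_in | u w x uw _ IH x_in].
  by exists 0.
by have [k w_reaches] := IH x_in; exists k.+1, w.
Qed.

Lemma cycle_distance_exists v : v < gn G ->
  exists d, reaches_cycle G c d v /\ forall k, reaches_cycle G c k v -> d <= k.
Proof.
move=> v_lt.
have reach_dec k : reaches_cycle G c k v \/ ~ reaches_cycle G c k v by apply: classic.
have [d [[d_reach d_min] _]] :=
  dec_inh_nat_subset_has_unique_least_element _ reach_dec (connected_reaches_cycle v v_lt).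
by exists d; split=> // k /d_min /leP.
Qed.

Lemma cycle_step_exists (d : nat -> nat) :
  (forall v, v < gn G ->
     reaches_cycle G c (d v) v /\ forall k, reaches_cycle G c k v -> d v <= k) ->
  forall v, v < gn G -> exists w, edge G v w /\
    (In v c -> exists i, i < length c /\ List.nth i c 0 = v /\
                         w = List.nth (Nat.modulo (i + 1) (length c)) c 0) /\
    (~ In v c -> d w < d v).
Proof.
move=> d_spec v v_lt; have [_ [_ c_edge]] := c_cycle.
case: (classic (In v c)) => [v_in | v_out].
  have [i [/ltP i_lt vi]] := In_nth _ _ 0 v_in.
  exists (List.nth (Nat.modulo (i + 1) (length c)) c 0).
  by split; [rewrite -vi; apply: c_edge; apply/ltP | split=> [_|//]; exists i].
have [d_reach _] := d_spec v v_lt.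
case dv: (d v) d_reach => [|k]; first by [].
move=> [w [vw w_reach]]; exists w; split=> //; split=> // _.
have w_lt : w < gn G by case: vw => _ [/ltP].
by have := (d_spec w w_lt).2 k w_reach; lia.
Qed.

(* On the cycle phi is the successor map, which has no 2-cycles since the cycle has
   length at least 3; off the cycle phi strictly decreases the distance to it. *)
Lemma orientation_exists : exists phi : nat -> nat, forall v, v < gn G ->
  edge G v (phi v) /\ phi (phi v) <> v.
Proof.
have [d d_spec] := choice_lt _ _ cycle_distance_exists.
have [phi phi_step] := choice_lt _ _ (cycle_step_exists d d_spec).
have [c_len [c_nodup _]] := c_cycle.
set L := length c in c_len phi_step.
have in_succ v : v < gn G -> In v c -> In (phi v) c.
  move=> v_lt v_in; have [_ [/(_ v_in) [i [_ [_ ->]]] _]] := phi_step v v_lt.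
  by apply: nth_In; apply: Nat.mod_upper_bound; lia.
exists phi => v v_lt; have [vw [v_cyc v_off]] := phi_step v v_lt.
split=> // back.
have w_lt : phi v < gn G by case: vw => _ [/ltP].
have [_ [w_cyc w_off]] := phi_step (phi v) w_lt.
case: (classic (In v c)) => [v_in | v_out].
  have [i [i_lt [vi wi]]] := v_cyc v_in.
  have [j [j_lt [wj ww]]] := w_cyc (in_succ v v_lt v_in).
  have index_inj := (NoDup_nth c 0).1 c_nodup.
  have ji : j = Nat.modulo (i + 1) L.
    by apply: index_inj; [apply/ltP | apply: Nat.mod_upper_bound; lia | rewrite wj].
  have := succ_mod_succ_mod_neq L i ltac:(lia) i_lt; rewrite -ji; apply.
  by apply: index_inj; [apply: Nat.mod_upper_bound; lia | apply/ltP | rewrite -ww back].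
case: (classic (In (phi v) c)) => [w_in | w_out].
  by apply: v_out; rewrite -back; apply: in_succ.
by have := v_off v_out; have := w_off w_out; rewrite back; lia.
Qed.

End Orientation.

Section Counting.
Local Open Scope nat_scope.

(* Each vertex v contributes the two ordered pairs (v, phi v) and (phi v, v) to the
   count; they are distinct for different v because phi has no 2-cycles. *)
Lemma two_mul_le_sum_adj n (adj : nat -> nat -> bool) (phi : nat -> nat) :
  (forall u v, u < n -> v < n -> adj u v = adj v u) ->
  (forall v, v < n -> phi v < n /\ adj v (phi v) /\ phi (phi v) <> v) ->
  2 * n <= \sum_(i < n) \sum_(j < n) adj i j.
Proof.
move=> adj_sym phi_spec.
have pair_le (i j : 'I_n) : ((j : nat) == phi i) + (phi j == i) <= adj i j.
  have [_ [adj_i phi2_i]] := phi_spec i (ltn_ord i).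
  have [_ [adj_j _]] := phi_spec j (ltn_ord j).
  case: eqP => [ji | _]; case: eqP => [ij | _] //=.
  - by case: phi2_i; rewrite -ji ij.
  - by rewrite ji adj_i.
  - by rewrite adj_sym // -ij adj_j.
have sum_delta k : k < n -> \sum_(j < n) ((j : nat) == k) = 1.
  move=> k_lt; rewrite (bigD1 (Ordinal k_lt)) //= eqxx big1 // => j.
  by rewrite -val_eqE /= => /negbTE ->.
have count1 : \sum_(i < n) \sum_(j < n) ((j : nat) == phi i) = n.
  rewrite (eq_bigr (fun _ => 1)) ?sum1_card ?card_ord // => i _.
  by apply: sum_delta; case: (phi_spec i (ltn_ord i)).
have count2 : \sum_(i < n) \sum_(j < n) (phi j == i) = n.
  rewrite exchange_big /= (eq_bigr (fun _ => 1)) ?sum1_card ?card_ord // => j _.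
  under eq_bigr => i _ do rewrite eq_sym.
  by apply: sum_delta; case: (phi_spec j (ltn_ord j)).
apply: (@leq_trans (\sum_(i < n) \sum_(j < n) (((j : nat) == phi i) + (phi j == i)))).
  under eq_bigr => i _ do rewrite big_split /=.
  by rewrite big_split /= count1 count2 mul2n addnn.
by apply: leq_sum => i _; apply: leq_sum => j _; apply: pair_le.
Qed.

End Counting.

Section Spectrum.
Import ring.
Local Open Scope ring_scope.

Lemma length_size (T : Type) (s : seq T) : length s = size s.
Proof. by elim: s => //= _ s ->. Qed.

Lemma foldr_Rplus_sum (T : Type) (F : T -> R) (s : seq T) :
  fold_right Rplus 0%R (map F s) = \sum_(x <- s) F x.
Proof. by elim: s => [|a s IH] /=; rewrite ?big_nil ?big_cons ?IH. Qed.

Lemma foldr_Rmult_prod (T : Type) (F : T -> R) (s : seq T) :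
  fold_right Rmult 1%R (map F s) = \prod_(x <- s) F x.
Proof. by elim: s => [|a s IH] /=; rewrite ?big_nil ?big_cons ?IH. Qed.

Lemma det_matrix n (M : nat -> nat -> R) : det n M = \det (\matrix_(i < n, j < n) M i j).
Proof.
elim: n M => [|m IH] M; first by rewrite det_mx00.
have seq_iota k l : List.seq k l = iota k l by elim: l k => //= l IHl k; rewrite IHl.
have -> : det m.+1 M = \sum_(0 <= j < m.+1) Rmult (Rmult (pow (-1) j) (M 0 j)) (det m (minor M j)).
  by rewrite -foldr_Rplus_sum /index_iota subn0 -seq_iota.
rewrite (expand_det_row _ ord0) big_mkord.
apply: eq_bigr => j _; rewrite /cofactor IH mxE add0n RpowE !RmultE mulrCA mulrA.
have -> : row' ord0 (col' j (\matrix_(i, k) M i k)) = \matrix_(i < m, k < m) minor M j i k.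
  apply/matrixP => r k; rewrite !mxE /minor /= /bump /=.
  by case: Nat.ltb_spec; case: ltnP => //; lia.
by [].
Qed.

Lemma spectrum_det n (M : nat -> nat -> R) lam : is_spectrum n M lam ->
  forall x, \det (x%:M - \matrix_(i < n, j < n) M i j) = \prod_(l <- lam) (x - l).
Proof.
move=> [_ charpoly] x; rewrite -foldr_Rmult_prod -charpoly /charpoly_at det_matrix.
congr (\det _); apply/matrixP => i j; rewrite !mxE RminusE.
case: (eqVneq i j) => [-> | ij]; first by rewrite Nat.eqb_refl mulr1n.
by rewrite mulr0n (proj2 (Nat.eqb_neq i j)) // => /val_inj /eqP; rewrite (negbTE ij).
Qed.

Lemma poly_eq_of_horner_inj (D : idomainType) (p q : {poly D}) (g : nat -> D) :
  injective g -> (forall k, p.[g k] = q.[g k]) -> p = q.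
Proof.
move=> g_inj pq; apply/eqP; rewrite -subr_eq0; apply/eqP.
apply: (@roots_geq_poly_eq0 _ _ [seq g k | k <- iota 0 (size (p - q))]).
- by apply/allP => _ /mapP [k _ ->]; rewrite /root hornerD hornerN pq subrr.
- by rewrite map_inj_uniq // iota_uniq.
- by rewrite size_map size_iota.
Qed.

Lemma perm_eq_of_prod_sub (F : numFieldType) (s t : seq F) :
  (forall x, \prod_(l <- s) (x - l) = \prod_(l <- t) (x - l)) -> perm_eq s t.
Proof.
move=> st; apply: prod_XsubC_eq; apply: (@poly_eq_of_horner_inj _ _ _ (fun k => k%:R)).
  by move=> a b /eqP; rewrite eqr_nat => /eqP.
move=> k; rewrite !horner_prod; under eq_bigr do rewrite hornerXsubC.
by under [RHS]eq_bigr do rewrite hornerXsubC.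
Qed.

Lemma spectrum_perm_eq n (M : nat -> nat -> R) l1 l2 :
  is_spectrum n M l1 -> is_spectrum n M l2 -> perm_eq l1 l2.
Proof.
move=> l1_spec l2_spec; apply: perm_eq_of_prod_sub => x.
by rewrite -(spectrum_det _ _ _ l1_spec) -(spectrum_det _ _ _ l2_spec).
Qed.

Lemma spectrum_det_add n (M : nat -> nat -> R) lam : is_spectrum n M lam ->
  forall x, \det (x%:M + \matrix_(i < n, j < n) M i j) = \prod_(l <- lam) (x + l).
Proof.
move=> lam_spec x; set A := \matrix_(i, j) M i j.
have -> : x%:M + A = (-1) *: ((- x)%:M - A) by apply/matrixP => i j; rewrite !mxE mulNrn; ring.
rewrite detZ (spectrum_det _ _ _ lam_spec); have [<- _] := lam_spec; rewrite length_size.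
elim: lam {lam_spec} => [|l lam IH]; first by rewrite !big_nil expr0 mulr1.
by rewrite /= !big_cons exprS -IH; ring.
Qed.

Definition adj_mx (G : graph) : 'M[R]_(gn G) := \matrix_(i, j) adj_matrix G i j.

(* Conjugating by the diagonal sign matrix of a 2-colouring negates the adjacency matrix. *)
Lemma bipartite_det_add_adj_mx G x : bipartite G ->
  \det (x%:M + adj_mx G) = \det (x%:M - adj_mx G).
Proof.
move=> [col col_edge].
pose s i : R := if col i then 1 else -1.
have s_sqr i : s i * s i = 1 by rewrite /s; case: (col i); ring.
have s_adj (i j : 'I_(gn G)) : s i * adj_matrix G i j * s j = - adj_matrix G i j.
  rewrite /adj_matrix; case ij: (gadj G i j); rewrite ?R0E ?R1E; last by ring.
  have := col_edge i j (conj (ltP (ltn_ord i)) (conj (ltP (ltn_ord j)) ij)).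
  by rewrite /s; case: (col i); case: (col j) => // _; ring.
pose D := diag_mx (\row_(i < gn G) s i).
have DAD : D *m (x%:M - adj_mx G) *m D = x%:M + adj_mx G.
  apply/matrixP => i j; rewrite mul_mx_diag mul_diag_mx !mxE.
  case: (eqVneq i j) => [<- | ij]; last by rewrite mulr0n sub0r add0r mulrN mulNr s_adj opprK.
  by rewrite mulr1n mulrBr mulrBl s_adj opprK mulrAC s_sqr mul1r.
have detD : \det D * \det D = 1.
  by rewrite /D det_diag -big_split /=; apply: big1 => i _; rewrite !mxE.
by rewrite -DAD !det_mulmx mulrC mulrA detD mul1r.
Qed.

Lemma bipartite_spectrum_sym G lam : bipartite G -> is_spectrum (gn G) (adj_matrix G) lam ->
  perm_eq lam (map -%R lam).
Proof.
move=> G_bip lam_spec; apply: perm_eq_of_prod_sub => x.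
rewrite big_map -(spectrum_det _ _ _ lam_spec) -bipartite_det_add_adj_mx //.
by rewrite (spectrum_det_add _ _ _ lam_spec); apply: eq_bigr => l _; rewrite opprK.
Qed.

Lemma char_poly_horner (Rc : comNzRingType) n (A : 'M[Rc]_n) x :
  (char_poly A).[x] = \det (x%:M - A).
Proof.
rewrite -horner_evalE /char_poly -det_map_mx; congr (\det _).
by apply/matrixP => i j; rewrite !mxE /= horner_evalE hornerD hornerN hornerMn hornerX hornerC.
Qed.

Lemma spectrum_sum_sqr n (M : nat -> nat -> R) lam : is_spectrum n M lam -> (0 < n)%N ->
  let A := \matrix_(i < n, j < n) M i j in \sum_(l <- lam) l ^+ 2 = \tr (A *m A).
Proof.
move=> lam_spec n_gt0 A.
have size_lam : n = size lam by case: lam_spec => <- _; rewrite length_size.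
have sqr_inj : injective (fun k : nat => (k%:R : R) ^+ 2).
  by move=> a b /= /eqP; rewrite -!natrX eqr_nat eqn_sqr => /eqP.
have charA2 : char_poly (A *m A) = \prod_(l <- map (fun l => l ^+ 2) lam) ('X - l%:P).
  apply: (@poly_eq_of_horner_inj _ _ _ _ sqr_inj) => k; rewrite char_poly_horner.
  have -> : (k%:R ^+ 2)%:M - A *m A = (k%:R%:M - A) *m (k%:R%:M + A).
    by rewrite mulmxBl !mulmxDr mul_scalar_mx mul_mx_scalar scale_scalar_mx expr2 opprD addrA
      mul_scalar_mx addrK.
  rewrite det_mulmx (spectrum_det _ _ _ lam_spec) (spectrum_det_add _ _ _ lam_spec).
  rewrite horner_prod big_map -big_split /=; apply: eq_bigr => l _.
  by rewrite hornerXsubC; ring.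
have := char_poly_trace (A *m A) n_gt0; rewrite charA2.
have -> : n.-1 = (size (map (fun l => l ^+ 2) lam)).-1 by rewrite size_map size_lam.
rewrite coefPn_prod_XsubC; last by rewrite size_map -size_lam -lt0n.
by rewrite big_map => /oppr_inj.
Qed.

Lemma trace_sqr_adj_mx G : simple_graph G ->
  \tr (adj_mx G *m adj_mx G) = (\sum_(i < gn G) \sum_(j < gn G) gadj G i j)%:R.
Proof.
move=> [G_sym _]; rewrite /mxtrace natr_sum; apply: eq_bigr => i _.
rewrite mxE natr_sum; apply: eq_bigr => j _.
rewrite !mxE /adj_matrix G_sym; try exact/ltP.
by case: (gadj G j i); rewrite ?R0E ?R1E ?mulr0 ?mulr1.
Qed.

Lemma det_row_col_perm (Rc : comNzRingType) n (s : {perm 'I_n}) (A : 'M[Rc]_n) :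
  \det (row_perm s (col_perm s A)) = \det A.
Proof.
by rewrite row_permE col_permE !det_mulmx !det_perm odd_permV mulrCA -expr2 sqrr_sign mulr1.
Qed.

Lemma charpoly_at_reindex n (M N : nat -> nat -> R) (f : nat -> nat) x :
  (forall i, i < n -> f i < n)%N ->
  (forall i j, i < n -> j < n -> f i = f j -> i = j)%N ->
  (forall i j, i < n -> j < n -> M i j = N (f i) (f j))%N ->
  charpoly_at n M x = charpoly_at n N x.
Proof.
move=> f_lt f_inj MN; rewrite /charpoly_at !det_matrix.
pose g (i : 'I_n) : 'I_n := Ordinal (f_lt i (ltn_ord i)).
have g_inj : injective g by move=> i j [/f_inj ij]; apply/val_inj/ij.
rewrite -[RHS](det_row_col_perm _ _ (perm g_inj)); congr (\det _).
apply/matrixP => i j; rewrite !mxE !permE /= MN //.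
case: (Nat.eqb_spec i j) => [-> | ij]; first by rewrite Nat.eqb_refl.
by have /Nat.eqb_neq -> : f i <> f j by move=> /(f_inj _ _ (ltn_ord i) (ltn_ord j)).
Qed.

Lemma isomorphic_charpoly_at G H x : isomorphic G H ->
  charpoly_at (gn G) (adj_matrix G) x = charpoly_at (gn H) (adj_matrix H) x.
Proof.
move=> [<- [f [f_lt [f_inj f_adj]]]].
apply: (charpoly_at_reindex _ _ _ f).
- by move=> i /ltP /f_lt /ltP.
- by move=> i j /ltP i_lt /ltP j_lt; apply: f_inj.
- by move=> i j /ltP i_lt /ltP j_lt; rewrite /adj_matrix f_adj.
Qed.

Lemma perm_eq_estrada (s t : seq R) : perm_eq s t -> estrada_of s = estrada_of t.
Proof. by move=> st; rewrite /estrada_of !foldr_Rplus_sum; apply: perm_big. Qed.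

End Spectrum.

Section Estrada.
Local Open Scope R_scope.

Lemma estrada_add_opp s :
  estrada_of s + estrada_of (map Ropp s) = 2 * fold_right Rplus 0 (map cosh s).
Proof.
rewrite /estrada_of; elim: s => [|l s IH] /=; first lra.
by rewrite [cosh l]/cosh; lra.
Qed.

Lemma bipartite_estrada_sum_cosh G lam : bipartite G ->
  is_spectrum (gn G) (adj_matrix G) lam -> estrada_of lam = fold_right Rplus 0 (map cosh lam).
Proof.
move=> G_bip lam_spec; have := estrada_add_opp lam.
by rewrite -(perm_eq_estrada _ _ (bipartite_spectrum_sym _ _ G_bip lam_spec)); lra.
Qed.

Lemma sum_sqr_spectrum_ge G c lam : simple_graph G -> connected G -> is_cycle G c ->
  is_spectrum (gn G) (adj_matrix G) lam ->
  2 * INR (gn G) <= fold_right Rplus 0 (map (fun l => l ^ 2) lam).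
Proof.
move=> G_simple G_conn c_cycle lam_spec.
have n_gt0 : (0 < gn G)%N.
  by have [c_len _] := c_cycle; have := cycle_length_le _ _ c_cycle; lia.
have [phi phi_spec] := orientation_exists _ _ G_conn c_cycle.
rewrite foldr_Rplus_sum; under eq_bigr do rewrite RpowE.
rewrite (spectrum_sum_sqr _ _ _ lam_spec n_gt0) -/(adj_mx G) trace_sqr_adj_mx //.
rewrite -[2]/(INR 2) -mult_INR INRE; apply/RleP; rewrite ler_nat.
apply: (two_mul_le_sum_adj _ _ phi).
- by case: G_simple => G_sym _ u v /ltP u_lt /ltP v_lt; apply: G_sym.
- by move=> v /phi_spec [[_ [/ltP phi_lt adj_phi]] phi2].
Qed.

Lemma sum_cosh_ge s : 5 / 6 * INR (length s) + 2 / 3 * fold_right Rplus 0 (map (fun l => l ^ 2) s)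
  <= fold_right Rplus 0 (map cosh s).
Proof.
elim: s => [|l s IH]; first by rewrite /=; lra.
by cbn [fold_right map length]; rewrite S_INR; have := cosh_ge_quadratic l; lra.
Qed.

Lemma C4_charpoly_at x :
  charpoly_at 4 (adj_matrix C4) x = fold_right Rmult 1 (map (fun l => x - l) [:: 2; -2; 0; 0]).
Proof. by rewrite /charpoly_at; simpl det; rewrite /minor /adj_matrix /=; ring. Qed.

Lemma C4_estrada G lam : isomorphic G C4 -> is_spectrum (gn G) (adj_matrix G) lam ->
  estrada_of lam = 2 * cosh 2 + 2.
Proof.
move=> G_C4 lam_spec.
have C4_spec : is_spectrum (gn G) (adj_matrix G) [:: 2; -2; 0; 0].
  split=> [|x]; first by case: G_C4 => ->.
  by rewrite (isomorphic_charpoly_at _ _ _ G_C4) C4_charpoly_at.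
rewrite (perm_eq_estrada _ _ (spectrum_perm_eq _ _ _ _ lam_spec C4_spec)) /estrada_of /= exp_0 /cosh.
by replace (- (2)) with (-2) by ring; lra.
Qed.

End Estrada.

Theorem mainTheorem13 (G : graph) (lam : list R) :
  simple_graph G -> unicyclic G -> bipartite G ->
  is_spectrum (gn G) (adj_matrix G) lam ->
  estrada_of lam >= 2 * cosh 2 + (INR (gn G) - 2) /\
  (estrada_of lam = 2 * cosh 2 + (INR (gn G) - 2) <-> isomorphic G C4).
Proof.
move=> G_simple [G_conn [c [c_cycle _]]] G_bip lam_spec.
have n_ge4 : (4 <= gn G)%N.
  by have := bipartite_cycle_length_ge4 _ _ G_bip c_cycle; have := cycle_length_le _ _ c_cycle; lia.
case: (eqVneq (gn G) 4%N) => [n4 | n_neq4].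
  have G_C4 := bipartite_4cycle_isomorphic_C4 _ _ G_simple G_bip c_cycle n4.
  rewrite (C4_estrada _ _ G_C4 lam_spec) n4 /=.
  by split; [lra | split=> // _; lra].
have n_ge5 : 5 <= INR (gn G) by have := le_INR 5 (gn G) ltac:(lia); rewrite [INR 5]/=; lra.
have len_lam : length lam = gn G by case: lam_spec.
have := sum_cosh_ge lam; have := sum_sqr_spectrum_ge _ _ _ G_simple G_conn c_cycle lam_spec.
rewrite -(bipartite_estrada_sum_cosh _ _ G_bip lam_spec) len_lam => sum_sqr_ge EE_ge.
have := two_cosh2_lt.
split=> [|]; first lra.
by split=> [EE_eq | [n4 _]]; [lra | rewrite n4 in n_neq4].
Qed.
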